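(* Let $\rho=12\cdots(k-1)k^a$ for some $a\ge1$, $k\ge1$ (a strictly increasing run $1,\dots,k$ followed by $a-1$ further copies of $k$). If patterns $\sigma$ and $\tau$ are strongly partition equivalent, then $p_n(\rho,\sigma)=p_n(\rho,\tau)$ for all $n\ge0$.
   Context: Set partitions are written in canonical sequential form (restricted growth words; $\pi_j$ is the index of the block containing $j$, blocks ordered by their minima, so the $i$-th block is the set of positions carrying letter $i$). Pattern containment means having a subsequence order-isomorphic to the pattern. $p_n(T)$ is the number of partitions of $[n]$ avoiding all patterns in $T$. Patterns $\sigma,\tau$ are strongly partition equivalent if there is a bijection $f$ from $\sigma$-avoiding partitions to $\tau$-avoiding partitions such that for every $\sigma$-avoiding partition $\pi$, $f(\pi)$ has the same number of blocks as $\pi$ and for each $i$ the $i$-th block of $f(\pi)$ has the same size as the $i$-th block of $\pi$. *)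

From mathcomp Require Import all_boot.
Set Implicit Arguments. Unset Strict Implicit. Unset Printing Implicit Defensive.

(* A set partition of [n] in canonical sequential form: a restricted growth
   word w of length n with letters 1,2,...: w_1 = 1 (if n > 0) and each letter
   is at most 1 + the maximum of the preceding letters. *)
Fixpoint rgf_from (m : nat) (w : seq nat) : bool :=
  if w is x :: w' then (0 < x) && (x <= m.+1) && rgf_from (maxn m x) w'
  else true.
Definition is_rgf (w : seq nat) : bool := rgf_from 0 w.

Definition order_iso (u v : seq nat) : bool :=
  (size u == size v) &&
  [forall i : 'I_(size u), forall j : 'I_(size u),
    (nth 0 u i <= nth 0 u j) == (nth 0 v i <= nth 0 v j)].

Definition contains (pi p : seq nat) : bool :=
  [exists m : (size pi).-tuple bool, order_iso (mask m pi) p].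
Definition avoids (pi p : seq nat) : bool := ~~ contains pi p.

(* p_n(T): number of partitions of [n] avoiding every pattern of T.
   A word of length n with letters in {0..n} is encoded as an n-tuple of 'I_n.+1;
   every RGF of length n has letters in {1..n}. *)
Definition pn (T : seq (seq nat)) (n : nat) : nat :=
  #|[set t : n.-tuple 'I_n.+1 |
      is_rgf (map val t) && all (avoids (map val t)) T]|.

Definition block_sizes (w : seq nat) : seq nat :=
  [seq count_mem i w | i <- iota 1 (\max_(x <- w) x)].

Definition strongly_partition_equivalent (sigma tau : seq nat) : Prop :=
  exists f : seq nat -> seq nat,
    (forall pi, is_rgf pi -> avoids pi sigma ->
        is_rgf (f pi) /\ avoids (f pi) tau /\ block_sizes (f pi) = block_sizes pi) /\
    (forall pi1 pi2, is_rgf pi1 -> avoids pi1 sigma -> is_rgf pi2 -> avoids pi2 sigma ->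
        f pi1 = f pi2 -> pi1 = pi2) /\
    (forall pi', is_rgf pi' -> avoids pi' tau ->
        exists pi, is_rgf pi /\ avoids pi sigma /\ f pi = pi').

Definition rho_pat (k a : nat) : seq nat := iota 1 k ++ nseq a.-1 k.

(* The key observation is that whether a set partition avoids rho depends only
   on its block sizes: a partition contains rho iff some block of index at
   least k has at least a elements (an occurrence of rho ends with a copies of
   a letter j >= k, and conversely the first occurrences of 1, ..., k-1 precede
   the block j in canonical sequential form).  Hence a bijection witnessing
   strong equivalence of sigma and tau, which preserves block sizes, also
   preserves avoidance of rho and the size n of the partition (the sum of its
   block sizes), so it restricts to a bijection between the partitions of [n]
   avoiding {rho, sigma} and those avoiding {rho, tau}. *)
From mathcomp Require Import all_boot zify.
Set Implicit Arguments. Unset Strict Implicit. Unset Printing Implicit Defensive.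

Lemma containsP (pi p : seq nat) :
  reflect (exists2 s, subseq s pi & order_iso s p) (contains pi p).
Proof.
apply: (iffP existsP) => [[m Hm] | [s /subseqP[m Hm ->] Hs]].
  by exists (mask m pi) => //; apply: mask_subseq.
by exists (Tuple (introT eqP Hm)).
Qed.

Lemma order_isoP (u v : seq nat) :
  reflect (size u = size v /\ forall i j, i < size u -> j < size u ->
             (nth 0 u i <= nth 0 u j) = (nth 0 v i <= nth 0 v j))
          (order_iso u v).
Proof.
apply: (iffP andP) => [[/eqP Hs /forallP H] | [Hs H]].
  split=> // i j Hi Hj.
  by have /forallP/(_ (Ordinal Hj))/eqP := H (Ordinal Hi).
split; first exact/eqP.
by apply/forallP=> i; apply/forallP=> j; apply/eqP; apply: H.
Qed.

Lemma order_iso_map (f : nat -> nat) (p : seq nat) :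
  {mono f : x y / x <= y} -> order_iso (map f p) p.
Proof.
move=> Hf; apply/order_isoP; rewrite size_map; split=> // i j Hi Hj.
by rewrite !(nth_map 0) // Hf.
Qed.

Lemma rgf_from_pos (m : nat) (w : seq nat) : rgf_from m w -> all (leq 1) w.
Proof. by elim: w m => //= x w IH m /andP[/andP[-> _] /IH]. Qed.

Lemma rgf_from_bounded (m : nat) (w : seq nat) :
  rgf_from m w -> all (fun x => x <= m + size w) w.
Proof.
elim: w m => //= x w IH m /andP[/andP[_ Hx] /IH Hw].
apply/andP; split; first by lia.
by apply: sub_all Hw => y /=; lia.
Qed.

Lemma rgf_bounded (w : seq nat) : is_rgf w -> all (fun x => x <= size w) w.
Proof. exact: rgf_from_bounded. Qed.

(* The j-th block size (0-based) is the multiplicity of the letter j+1; this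
   holds for every word, blocks beyond the last one having size 0. *)
Lemma nth_block_sizes (w : seq nat) (j : nat) :
  nth 0 (block_sizes w) j = count_mem j.+1 w.
Proof.
rewrite /block_sizes; set M := \max_(x <- w) x.
have [jM | Mj] := ltnP j M.
  by rewrite (nth_map 0) ?size_iota // nth_iota // add1n.
rewrite nth_default ?size_map ?size_iota //; apply/esym/count_memPn.
apply/negP => /(@leq_bigmax_seq _ _ xpredT id) /(_ isT); rewrite -/M; lia.
Qed.

Lemma block_sizes_count (w1 w2 : seq nat) (j : nat) :
  block_sizes w1 = block_sizes w2 -> 0 < j -> count_mem j w1 = count_mem j w2.
Proof. by move=> Hb; case: j => // j _; rewrite -!nth_block_sizes Hb. Qed.

Lemma sumn_count_mem (w r : seq nat) : uniq r ->
  sumn [seq count_mem i w | i <- r] = count (mem r) w.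
Proof.
elim: r => [|y r IH] /=; first by rewrite count_pred0.
case/andP=> yr /IH ->; rewrite -count_predUI.
rewrite (@eq_count _ (predI _ _) pred0) ?count_pred0 ?addn0; last first.
  by move=> x /=; case: eqP => // ->; rewrite (negbTE yr).
by apply: eq_count => x; rewrite /= in_cons.
Qed.

Lemma sumn_block_sizes (w : seq nat) : is_rgf w -> sumn (block_sizes w) = size w.
Proof.
move=> Hw; rewrite /block_sizes sumn_count_mem ?iota_uniq //.
rewrite -[RHS]count_predT; apply: eq_in_count => x xw /=.
rewrite mem_iota (allP (rgf_from_pos Hw)) //= add1n ltnS.
exact: (@leq_bigmax_seq _ _ xpredT id).
Qed.

Lemma rho_patE (k a : nat) : 0 < k -> 0 < a -> rho_pat k a = iota 1 k.-1 ++ nseq a k.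
Proof.
case: k => // k _; case: a => // a _.
by rewrite /rho_pat -(addn1 k) iotaD -catA add1n addn1.
Qed.

Lemma size_rho_pat (k a : nat) : size (rho_pat k a) = k + a.-1.
Proof. by rewrite /rho_pat size_cat size_iota size_nseq. Qed.

Lemma nth_rho_pat (k a q : nat) : q < size (rho_pat k a) ->
  nth 0 (rho_pat k a) q = if q < k then q.+1 else k.
Proof.
rewrite /rho_pat size_cat size_iota size_nseq nth_cat size_iota => Hq.
by case: ltnP => Hqk; rewrite ?nth_iota ?add1n ?nth_nseq //; case: ifP; lia.
Qed.

Lemma nseq_subseq (a j : nat) (w : seq nat) :
  a <= count_mem j w -> subseq (nseq a j) w.
Proof.
move=> Ha; apply: subseq_trans (filter_subseq (pred1 j) w).
have /all_pred1P -> := filter_all (pred1 j) w.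
rewrite size_filter -(subnKC Ha) nseqD; exact: prefix_subseq.
Qed.

(* In a restricted growth word read after letters all below i, the word
   i (i+1) ... (j-1) j^a is a subsequence as soon as j occurs a times: the
   letters i, ..., j-1 first appear in increasing order, and none of the
   occurrences of j can precede the first occurrence of j-1. *)
Lemma rgf_from_run_subseq (m i j a : nat) (w : seq nat) : 0 < a ->
  rgf_from m w -> m < i -> i <= j -> a <= count_mem j w ->
  subseq (iota i (j - i) ++ nseq a j) w.
Proof.
move=> a0; elim: w m i => [|x w IH] m i; first by move=> _ _ _ /=; lia.
rewrite [rgf_from _ _]/= [count _ _]/= => /andP[/andP[_ xm] Hw] mi ij Hc.
have [eij | neij] := eqVneq i j.
  by rewrite eij subnn; exact: (nseq_subseq (w := x :: w)).
have {neij}ij : i < j by rewrite ltn_neqAle neij.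
have [xi | xi] := eqVneq x i.
  rewrite -(subnSK ij) /= xi eqxx; apply: (IH i) => //.
    by move: Hw; rewrite xi (maxn_idPr (ltnW mi)).
  by move: Hc; rewrite xi (ltn_eqF ij).
have xj : x != j by lia.
apply: subseq_trans (subseq_cons w x); apply: (IH (maxn m x)) => //.
- by lia.
- exact: ltnW.
- by rewrite (negbTE xj) in Hc.
Qed.

Lemma large_block_contains_rho (k a j : nat) (w : seq nat) : 0 < k -> 0 < a ->
  is_rgf w -> k <= j -> a <= count_mem j w -> contains w (rho_pat k a).
Proof.
move=> k0 a0 Hw kj Hc; apply/containsP.
pose f x := if x < k then x else x + (j - k).
exists (map f (rho_pat k a)); last first.
  by apply: order_iso_map => x y; rewrite /f; do 2!case: ifP; lia.
have -> : map f (rho_pat k a) = iota 1 k.-1 ++ nseq a j.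
  rewrite rho_patE // map_cat map_nseq /f ltnn subnKC // map_id_in // => x.
  by rewrite mem_iota; case: ifP; lia.
apply: subseq_trans (rgf_from_run_subseq a0 Hw (ltn0Sn 0) _ Hc); last by lia.
by rewrite (_ : j - 1 = k.-1 + (j - k)); [rewrite iotaD cat_subseq ?prefix_subseq | lia].
Qed.

(* Conversely, an occurrence s of rho in a partition starts with k increasing
   positive letters, so its repeated letter j = s_k is at least k, and j occurs
   a times. *)
Lemma contains_rho_large_block (k a : nat) (w : seq nat) : 0 < k -> 0 < a ->
  is_rgf w -> contains w (rho_pat k a) -> exists2 j, k <= j & a <= count_mem j w.
Proof.
move=> k0 a0 Hw /containsP[s sw Hs].
have /order_isoP[Hsz Hcmp] := Hs; rewrite size_rho_pat in Hsz.
rewrite Hsz in Hcmp.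
have rho_at q : q < k + a.-1 -> nth 0 (rho_pat k a) q = if q < k then q.+1 else k.
  by move=> Hq; rewrite nth_rho_pat // size_rho_pat.
have s_pos q : q < k + a.-1 -> 0 < nth 0 s q.
  move=> Hq; apply: (allP (rgf_from_pos Hw)); apply: (mem_subseq sw).
  by apply: mem_nth; rewrite Hsz.
have s_run q : q < k -> q < nth 0 s q.
  elim: q => [|q IH] Hq; first by apply: s_pos; lia.
  have : nth 0 s q < nth 0 s q.+1.
    by rewrite ltnNge Hcmp -?ltnNge ?rho_at; try lia; do 2!case: ifP; lia.
  by have := IH (ltnW Hq); lia.
set j := nth 0 s k.-1.
have s_tail q : k.-1 <= q < k + a.-1 -> nth 0 s q = j.
  case/andP=> Hkq Hq; apply/eqP; rewrite eqn_leq !Hcmp ?rho_at; try lia.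
  by do 2!case: ifP; lia.
exists j; first by have := s_run k.-1; lia.
have /all_pred1P Hdrop : all (pred1 j) (drop k.-1 s).
  apply/allP => x /(nthP 0)[q]; rewrite size_drop nth_drop Hsz => Hq <- /=.
  by rewrite s_tail //; lia.
apply: leq_trans (leq_count_subseq _ sw).
rewrite -(cat_take_drop k.-1 s) count_cat Hdrop count_nseq /= eqxx size_drop Hsz; lia.
Qed.

Lemma contains_rhoP (k a : nat) (w : seq nat) : 0 < k -> 0 < a -> is_rgf w ->
  contains w (rho_pat k a) <-> exists2 j, k <= j & a <= count_mem j w.
Proof.
move=> k0 a0 Hw; split; first exact: contains_rho_large_block.
by case=> j kj Hj; apply: large_block_contains_rho Hj.
Qed.

Definition block_size_determined (rho : seq nat) : Prop :=
  forall w1 w2, is_rgf w1 -> is_rgf w2 -> block_sizes w1 = block_sizes w2 ->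
    avoids w1 rho = avoids w2 rho.

(* Avoidance of rho is determined by block sizes, as containment of rho only
   depends on the multiplicities of the letters j >= k. *)
Lemma rho_pat_block_size_determined (k a : nat) : 0 < k -> 0 < a ->
  block_size_determined (rho_pat k a).
Proof.
move=> k0 a0.
suff transfer w1 w2 : is_rgf w1 -> is_rgf w2 -> block_sizes w1 = block_sizes w2 ->
    contains w1 (rho_pat k a) -> contains w2 (rho_pat k a).
  move=> w1 w2 H1 H2 Hb; rewrite /avoids; congr negb.
  by apply/idP/idP; apply: transfer.
move=> H1 H2 Hb /(contains_rhoP k0 a0 H1)[j kj Hj]; apply/(contains_rhoP k0 a0 H2).
by exists j; rewrite // -(block_sizes_count Hb) //; lia.
Qed.

Section TupleEncoding.
Variable n : nat.

Definition tuple_of (s : seq nat) : n.-tuple 'I_n.+1 :=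
  [tuple inord (nth 0 s i) | i < n].

Lemma tuple_ofK (s : seq nat) : size s = n -> all (fun x => x <= n) s ->
  map val (tuple_of s) = s.
Proof.
move=> Hs Hle; apply: (@eq_from_nth _ 0); rewrite size_map size_tuple // => i Hi.
rewrite (nth_map ord0) ?size_tuple // -[i]/(nat_of_ord (Ordinal Hi)) nth_mktuple.
by rewrite /= inordK // ltnS (allP Hle) // mem_nth // Hs.
Qed.

Lemma val_tupleK (t : n.-tuple 'I_n.+1) : tuple_of (map val t) = t.
Proof.
apply: val_inj; apply: (inj_map val_inj); apply: tuple_ofK.
  by rewrite size_map size_tuple.
by apply/allP => _ /mapP[y _ ->]; rewrite -ltnS ltn_ord.
Qed.

End TupleEncoding.

Lemma card_words_bij (n : nat) (P Q : pred (seq nat)) (g : seq nat -> seq nat) :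
  (forall w, P w -> all (fun x => x <= size w) w) ->
  (forall v, Q v -> all (fun x => x <= size v) v) ->
  (forall w, P w -> Q (g w) /\ size (g w) = size w) ->
  {in P &, injective g} ->
  (forall v, Q v -> exists2 w, P w & g w = v) ->
  #|[set t : n.-tuple 'I_n.+1 | P (map val t)]| =
  #|[set t : n.-tuple 'I_n.+1 | Q (map val t)]|.
Proof.
move=> Pbound Qbound gPQ ginj gsurj.
have encK s : size s = n -> all (fun x => x <= size s) s -> map val (tuple_of n s) = s.
  by move=> Hs; rewrite Hs; apply: tuple_ofK.
have size_val (t : n.-tuple 'I_n.+1) : size (map val t) = n by rewrite size_map size_tuple.
pose G (t : n.-tuple 'I_n.+1) := tuple_of n (g (map val t)).
have valG (t : n.-tuple 'I_n.+1) : P (map val t) -> map val (G t) = g (map val t).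
  move=> Pt; have [Qgt Hsz] := gPQ _ Pt.
  by apply: encK; [rewrite Hsz size_val | exact: Qbound].
have G_inj : {in [set t : n.-tuple 'I_n.+1 | P (map val t)] &, injective G}.
  move=> t1 t2; rewrite !inE => P1 P2 eqG.
  have : map val (G t1) = map val (G t2) by rewrite eqG.
  rewrite !valG // => /(ginj _ _ P1 P2) /(inj_map val_inj); exact: val_inj.
rewrite -(card_in_imset G_inj); apply: eq_card => t; rewrite [in RHS]inE.
apply/imsetP/idP => [[t0 Pt0 ->] | Qt].
  by rewrite inE in Pt0; rewrite valG //; have [] := gPQ _ Pt0.
have [w Pw gw] := gsurj _ Qt.
have Hw : size w = n by rewrite -(gPQ _ Pw).2 gw size_val.
have valw : map val (tuple_of n w) = w by apply: encK => //; exact: Pbound.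
exists (tuple_of n w); first by rewrite inE valw.
by rewrite /G valw gw val_tupleK.
Qed.

Lemma pn_block_size_determined (rho sigma tau : seq nat) :
  block_size_determined rho -> strongly_partition_equivalent sigma tau ->
  forall n, pn [:: rho; sigma] n = pn [:: rho; tau] n.
Proof.
move=> rho_bs [f [f_avoid [f_inj f_surj]]] n.
apply: (@card_words_bij n (fun w => is_rgf w && all (avoids w) [:: rho; sigma])
                          (fun w => is_rgf w && all (avoids w) [:: rho; tau]) f).
- by move=> w /andP[/rgf_bounded].
- by move=> w /andP[/rgf_bounded].
- move=> w /and3P[Hw Hr /andP[Hs _]]; have [Hf [Ht Hb]] := f_avoid _ Hw Hs.
  rewrite /= Hf Ht (rho_bs _ _ Hf Hw Hb) Hr; split=> //.
  by rewrite -sumn_block_sizes // Hb sumn_block_sizes.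
- move=> w1 w2; rewrite !unfold_in => /and3P[H1 _ /andP[S1 _]] /and3P[H2 _ /andP[S2 _]].
  exact: f_inj.
- move=> v /and3P[Hv Hr /andP[Ht _]]; have [w [Hw [Hs fw]]] := f_surj _ Hv Ht.
  have [Hf [_ Hb]] := f_avoid _ Hw Hs.
  by exists w; rewrite //= Hw Hs (rho_bs _ _ Hw Hf (esym Hb)) fw Hr.
Qed.

Theorem theorem4p5 (k a : nat) (sigma tau : seq nat) :
  1 <= k -> 1 <= a -> is_rgf sigma -> is_rgf tau ->
  strongly_partition_equivalent sigma tau ->
  forall n : nat, pn [:: rho_pat k a; sigma] n = pn [:: rho_pat k a; tau] n.
Proof.
move=> k0 a0 _ _; apply: pn_block_size_determined.
exact: rho_pat_block_size_determined.
Qed.
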